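(* If degree sequences $e$ and $d$ satisfy $e\preccurlyeq d$ in the Rao order, then $\Delta^*(e)\le \Delta^*(d)$.
   Context: Degree sequences (of finite simple graphs with at least one vertex) are listed in nonincreasing order. For such $d$, $m(d)=\max\{i : d_i\ge i-1\}$ and, for integers $k\ge 0$, $\Delta_k(d)=k(k-1)+\sum_{i>k}\min\{k,d_i\}-\sum_{i\le k}d_i$; $\Delta^*(d)=\max\{\Delta_k(d):1\le k\le m(d)\}$. Rao order: $e\preccurlyeq d$ if there exist a realization $H$ of $e$ and a realization $G$ of $d$ such that $H$ is an induced subgraph of $G$. *)

From mathcomp Require Import all_boot all_order all_algebra.
Set Implicit Arguments. Unset Strict Implicit. Unset Printing Implicit Defensive.
Import Order.TTheory GRing.Theory Num.Theory.

(* A degree sequence d (a seq nat, d_i = nth 0 d (i-1))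
   is realized by g : rel 'I_n when n = size d and vertex i has degree
   nth 0 d i (realizations are taken with vertices labelled so that vertex
   i carries the i-th entry; any realization can be relabelled so). *)
Definition simple_graph (n : nat) (g : rel 'I_n) : Prop :=
  symmetric g /\ irreflexive g.

Definition deg (n : nat) (g : rel 'I_n) (v : 'I_n) : nat := #|[set w | g v w]|.

Definition realizes (n : nat) (g : rel 'I_n) (d : seq nat) : Prop :=
  simple_graph g /\ size d = n /\ forall v : 'I_n, deg g v = nth 0 d v.

Definition degree_sequence (d : seq nat) : Prop :=
  (0 < size d)%N /\ sorted geq d /\ exists n (g : rel 'I_n), realizes g d.

(* Rao order: e <= d iff some realization H of e is an induced subgraph of
   some realization G of d (H is isomorphic, via an injective map f, to the
   subgraph of G induced on the image of f). *)
Definition rao_le (e d : seq nat) : Prop :=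
  exists (m n : nat) (h : rel 'I_m) (g : rel 'I_n) (f : 'I_m -> 'I_n),
    [/\ realizes h e, realizes g d, injective f &
        forall x y : 'I_m, h x y = g (f x) (f y)].

(* m(d) = max { i (1-based) : d_i >= i - 1 }; with 0-based j = i - 1 *)
Definition mdeg (d : seq nat) : nat :=
  \max_(j < size d | (j <= nth 0 d j)%N) j.+1.

Definition Delta (k : nat) (d : seq nat) : int :=
  ((k * (k - 1))%N%:Z
   + (\sum_(k <= j < size d) minn k (nth 0 d j))%N%:Z
   - (\sum_(0 <= j < k) nth 0 d j)%N%:Z)%R.

Definition Delta_star (d : seq nat) : int :=
  \big[Num.max/Delta 1 d]_(1 <= k < (mdeg d).+1) Delta k d.

From mathcomp Require Import all_boot all_order all_algebra zify.
Import Order.TTheory GRing.Theory Num.Theory.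
Set Implicit Arguments. Unset Strict Implicit.

(* For a graph and a vertex set S of size k, the Erdos-Gallai slack of S is
     k(k-1) + sum_{x notin S} min(k, deg x) - sum_{x in S} deg x,
   and Delta_k(d) is the slack of the k vertices of largest degree, which
   minimise the slack among all k-sets.  Let h, realizing e, be the subgraph
   of g, realizing d, induced by an injection f.  Double counting of the
   edges inside, across and outside a set T shows that the slack of
   A = f^-1(T) in h is at most the slack of T in g; the same holds for A
   enlarged by vertices of degree >= |A u B| - 1 when every vertex outside T
   has degree at most |T|.  Given 1 <= k <= m(e), we choose T among the
   initial segments of g: either some initial segment of length j <= m(d)
   pulls back to exactly k vertices, or the segment of length m(d) pulls back
   to fewer and we enlarge its preimage by top vertices of h.  Either way
   Delta_k(e) <= Delta_j(d) for some 1 <= j <= m(d), whence the theorem. *)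

(* lia compares atoms syntactically, while two big sums may agree only up to
   conversion (different paths to the same canonical instance); abstracting
   them with set, which matches up to conversion, identifies such sums. *)
Ltac abstract_sums := repeat match goal with
  | |- context [bigop ?a ?b ?c] =>
      let s := fresh "s" in set s := bigop a b c; clearbody s
  end.

Section Sums.
Variable T : finType.

Lemma sum_setC (X : {set T}) (F : T -> nat) :
  \sum_(x in X) F x + \sum_(x in ~: X) F x = \sum_x F x.
Proof.
have -> : \sum_x F x = \sum_(x in setT) F x by apply: eq_bigl => x; rewrite inE.
by rewrite [RHS](big_setID X) /= setTI setTD.
Qed.

Lemma leq_sum_subset (X Y : {set T}) (F : T -> nat) : X \subset Y ->
  \sum_(x in X) F x <= \sum_(x in Y) F x.
Proof. by move=> sXY; rewrite [X in _ <= X](big_setID X) (setIidPr sXY) leq_addr. Qed.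

Lemma sum_le_card_mul (X : {set T}) (F : T -> nat) c :
  (forall x, x \in X -> F x <= c) -> \sum_(x in X) F x <= #|X| * c.
Proof. by move=> H; rewrite -sum_nat_const; apply: leq_sum. Qed.

Lemma card_mul_le_sum (X : {set T}) (F : T -> nat) c :
  (forall x, x \in X -> c <= F x) -> #|X| * c <= \sum_(x in X) F x.
Proof. by move=> H; rewrite -sum_nat_const; apply: leq_sum. Qed.

Lemma sum_setU_disjoint (A B : {set T}) (F : T -> nat) : B \subset ~: A ->
  \sum_(x in A :|: B) F x = \sum_(x in A) F x + \sum_(x in B) F x.
Proof.
move=> sBA; rewrite (big_setID A) /= (setIidPr (subsetUl A B)) setDUl setDv set0U.
by rewrite (setDidPl _) // disjoints_subset.
Qed.

Lemma card_setU_disjoint (A B : {set T}) : B \subset ~: A -> #|A :|: B| = #|A| + #|B|.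
Proof.
move=> sBA; have /disjoint_setI0 dAB : [disjoint A & B] by rewrite disjoint_sym disjoints_subset.
by rewrite cardsU dAB cards0 subn0.
Qed.

Lemma exists_subset_card (X : {set T}) t : t <= #|X| ->
  exists2 B : {set T}, B \subset X & #|B| = t.
Proof.
move=> tX; exists [set x in take t (enum X)].
  by apply/subsetP => x; rewrite inE => /mem_take; rewrite mem_enum.
rewrite cardsE (card_uniqP (take_uniq t (enum_uniq (mem X)))) size_take -cardE.
by case: ltnP => // Xt; apply/eqP; rewrite eqn_leq Xt tX.
Qed.
End Sums.

Section Neighbours.
Variables (T : finType) (r : rel T).

Definition deg_in (v : T) (X : {set T}) : nat := \sum_(w in X) r v w.

Lemma deg_in_le_card v (X : {set T}) : deg_in v X <= #|X|.
Proof. by rewrite /deg_in -sum1_card; apply: leq_sum => w _; case: (r v w). Qed.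

Lemma deg_in_subset v (X Y : {set T}) : X \subset Y -> deg_in v X <= deg_in v Y.
Proof. exact: leq_sum_subset. Qed.

Lemma deg_in_le_min v (X : {set T}) : deg_in v X <= minn #|X| (deg_in v setT).
Proof. by rewrite leq_min deg_in_le_card deg_in_subset ?subsetT. Qed.

Lemma deg_in_setC v (X : {set T}) : deg_in v X + deg_in v (~: X) = deg_in v setT.
Proof. by rewrite /deg_in sum_setC; apply: eq_bigl => x; rewrite inE. Qed.

Lemma deg_in_irr v (X : {set T}) : irreflexive r -> v \in X -> deg_in v X <= #|X| - 1.
Proof.
move=> irr vX; rewrite /deg_in (bigD1 v vX) /= irr add0n (cardsD1 v X) vX add1n subn1 /=.
rewrite (eq_bigl (mem (X :\ v))) => [|w]; last by rewrite !inE andbC.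
by rewrite -sum1_card; apply: leq_sum => w _; case: (r v w).
Qed.

Lemma sum_deg_in_setC (X Y : {set T}) :
  \sum_(v in Y) deg_in v setT = \sum_(v in Y) deg_in v X + \sum_(v in Y) deg_in v (~: X).
Proof. by rewrite -big_split; apply: eq_bigr => v _ /=; rewrite deg_in_setC. Qed.

Hypothesis rsym : symmetric r.

Lemma sum_deg_in_sym (X Y : {set T}) :
  \sum_(x in X) deg_in x Y = \sum_(y in Y) deg_in y X.
Proof.
rewrite /deg_in exchange_big /=; apply: eq_bigr => y _; apply: eq_bigr => x _.
by rewrite rsym.
Qed.

Lemma sum_deg_split (X : {set T}) :
  \sum_(v in X) deg_in v setT = \sum_(v in X) deg_in v X + \sum_(v in ~: X) deg_in v X.
Proof.
rewrite [\sum_(v in ~: X) _]sum_deg_in_sym -big_split; apply: eq_bigr => v _.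
by rewrite -(deg_in_setC v X).
Qed.
End Neighbours.

Lemma deg_deg_in n (g : rel 'I_n) v : deg g v = deg_in g v setT.
Proof.
rewrite /deg -sum1_card /deg_in big_mkcond /= [RHS]big_mkcond /=.
by apply: eq_bigr => w _; rewrite !inE; case: (g v w).
Qed.

(* Counting ordered pairs of distinct elements of a j-set split by an
   a-subset, and of a k-set against an a-subset. *)
Lemma pairs_split a j : a <= j ->
  a * (j - a) + (j - a) * (j - 1) + a * (a - 1) = j * (j - 1).
Proof. move=> aj; nia. Qed.

Lemma pairs_extend a k : a <= k ->
  k * (k - 1) <= a * (a - 1) + 2 * ((k - a) * (k - 1)).
Proof. move=> ak; nia. Qed.

Definition slack (T : finType) (r : rel T) (S : {set T}) : int :=
  ((#|S| * (#|S| - 1) + \sum_(x in ~: S) minn #|S| (deg_in r x setT))%N%:Z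
   - (\sum_(x in S) deg_in r x setT)%N%:Z)%R.

Lemma slack_le (T1 T2 : finType) (r1 : rel T1) (r2 : rel T2)
    (S1 : {set T1}) (S2 : {set T2}) :
  #|S1| * (#|S1| - 1) + \sum_(x in ~: S1) minn #|S1| (deg_in r1 x setT)
      + \sum_(x in S2) deg_in r2 x setT
    <= #|S2| * (#|S2| - 1) + \sum_(x in ~: S2) minn #|S2| (deg_in r2 x setT)
      + \sum_(x in S1) deg_in r1 x setT ->
  (slack r1 S1 <= slack r2 S2)%R.
Proof. rewrite /slack; lia. Qed.

Section InducedSubgraph.
Variables (V W : finType) (g : rel V) (h : rel W) (f : W -> V).
Hypotheses (gsym : symmetric g) (girr : irreflexive g) (hsym : symmetric h)
  (finj : injective f) (fh : forall x y, h x y = g (f x) (f y)).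
Variable T : {set V}.
Let A := f @^-1: T.

Lemma deg_in_image x (X : {set W}) : deg_in g (f x) (f @: X) = deg_in h x X.
Proof.
rewrite /deg_in big_imset /=; last by move=> a b _ _; apply: finj.
by apply: eq_bigr => y _; rewrite fh.
Qed.

Lemma image_preim_sub : f @: A \subset T.
Proof. by apply/subsetP => v /imsetP[x]; rewrite inE => xA ->. Qed.

Lemma image_preimC_sub : f @: (~: A) \subset ~: T.
Proof. by apply/subsetP => v /imsetP[x]; rewrite !inE => xA ->. Qed.

Lemma card_preim_le : #|A| <= #|T|.
Proof. by rewrite -(card_imset _ finj) subset_leq_card ?image_preim_sub. Qed.

Let U := T :\: f @: A.

Lemma card_unhit : #|U| = #|T| - #|A|.
Proof. by rewrite cardsD (setIidPr image_preim_sub) card_imset. Qed.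

Lemma deg_in_preim_split x : deg_in g (f x) T = deg_in h x A + deg_in g (f x) U.
Proof.
rewrite -deg_in_image /deg_in (big_setID (f @: A)) /=.
by rewrite (setIidPr image_preim_sub).
Qed.

(* The neighbours of f x in U lie outside the image of f, so they are not
   counted by the degree of x in h. *)
Lemma deg_add_unhit x : deg_in h x setT + deg_in g (f x) U <= deg_in g (f x) setT.
Proof.
rewrite -(deg_in_setC g (f x) (f @: setT)) -deg_in_image leq_add2l deg_in_subset //.
apply/subsetP => w; rewrite !inE => /andP[wA wT]; apply/imsetP => -[y _ wy].
by move: wA; rewrite wy imset_f // inE -wy.
Qed.

Lemma internal_edges :
  \sum_(v in T) deg_in g v T + #|A| * (#|A| - 1)
    <= #|T| * (#|T| - 1) + \sum_(x in A) deg_in h x A.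
Proof.
rewrite (big_setID (f @: A)) /= (setIidPr image_preim_sub) -/U big_imset /=;
  last by move=> a b _ _; apply: finj.
have hitB : \sum_(x in A) deg_in g (f x) T <= \sum_(x in A) deg_in h x A + #|A| * (#|T| - #|A|).
  rewrite -sum_nat_const -big_split /=; apply: leq_sum => x _.
  by rewrite deg_in_preim_split leq_add2l -card_unhit deg_in_le_card.
have unhitB : \sum_(v in U) deg_in g v T <= #|U| * (#|T| - 1).
  apply: sum_le_card_mul => v; rewrite inE => /andP[_ vT]; exact: deg_in_irr.
rewrite card_unhit in unhitB; rewrite -(pairs_split card_preim_le).
move: hitB unhitB; move: (#|A| * (#|T| - #|A|)) ((#|T| - #|A|) * (#|T| - 1)) => P Q.
lia.
Qed.

(* A vertex x outside A gains, in g, at most #|T| - #|A| neighbours in T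
   beyond its neighbours in A, and these are extra neighbours of f x. *)
Lemma outside_vertex_bound x :
  minn #|A| (deg_in h x setT) + deg_in g (f x) T
    <= minn #|T| (deg_in g (f x) setT) + deg_in h x A.
Proof.
rewrite deg_in_preim_split.
have := deg_add_unhit x; have := deg_in_le_card g (f x) U; rewrite card_unhit.
have := card_preim_le.
move: (deg_in g (f x) U) (deg_in h x setT) (deg_in g (f x) setT) (deg_in h x A) => c dx dfx dA.
lia.
Qed.

Lemma crossing_edges :
  \sum_(x in ~: A) minn #|A| (deg_in h x setT) + \sum_(v in ~: T) deg_in g v T
    <= \sum_(v in ~: T) minn #|T| (deg_in g v setT) + \sum_(x in ~: A) deg_in h x A.
Proof.
pose spare v := minn #|T| (deg_in g v setT) - deg_in g v T.
have spareE v : spare v + deg_in g v T = minn #|T| (deg_in g v setT).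
  by rewrite subnK // deg_in_le_min.
have outA : \sum_(x in ~: A) minn #|A| (deg_in h x setT)
    <= \sum_(x in ~: A) spare (f x) + \sum_(x in ~: A) deg_in h x A.
  rewrite -big_split; apply: leq_sum => x _ /=.
  by rewrite -(leq_add2r (deg_in g (f x) T)) addnAC spareE outside_vertex_bound.
have imgT : \sum_(x in ~: A) spare (f x) <= \sum_(v in ~: T) spare v.
  rewrite -big_imset /=; last by move=> a b _ _; apply: finj.
  exact/leq_sum_subset/image_preimC_sub.
have sumT : \sum_(v in ~: T) spare v + \sum_(v in ~: T) deg_in g v T
    = \sum_(v in ~: T) minn #|T| (deg_in g v setT).
  by rewrite -big_split; apply: eq_bigr => v _; exact: spareE.
lia.
Qed.

(* f maps the edges inside ~: A injectively to edges inside ~: T. *)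
Lemma outer_edges :
  \sum_(x in ~: A) deg_in h x (~: A) <= \sum_(v in ~: T) deg_in g v (~: T).
Proof.
apply: (@leq_trans (\sum_(x in ~: A) deg_in g (f x) (~: T))).
  apply: leq_sum => x _; rewrite -deg_in_image.
  exact/deg_in_subset/image_preimC_sub.
rewrite -(big_imset (fun v => deg_in g v (~: T))) /=; last by move=> a b _ _; apply: finj.
exact/leq_sum_subset/image_preimC_sub.
Qed.

Lemma slack_preim : (slack h A <= slack g T)%R.
Proof.
apply: slack_le; rewrite (sum_deg_split gsym) (sum_deg_split hsym).
have := internal_edges; have := crossing_edges; lia.
Qed.

Lemma slack_preim_ext (B : {set W}) :
  B \subset ~: A -> (forall x, x \in B -> #|A :|: B| - 1 <= deg_in h x setT) ->
  (forall v, v \notin T -> deg_in g v setT <= #|T|) ->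
  (slack h (A :|: B) <= slack g T)%R.
Proof.
move=> sBA highB lowT; set S := A :|: B.
have cardS : #|S| = #|A| + #|B| by exact: card_setU_disjoint.
have capT : \sum_(v in ~: T) minn #|T| (deg_in g v setT) = \sum_(v in ~: T) deg_in g v setT.
  by apply: eq_bigr => v; rewrite inE => vT; apply/minn_idPr/lowT.
have capS : \sum_(x in ~: S) minn #|S| (deg_in h x setT) <= \sum_(x in ~: S) deg_in h x setT.
  by apply: leq_sum => x _; apply: geq_minr.
have degB : #|B| * (#|S| - 1) <= \sum_(x in B) deg_in h x setT by apply: card_mul_le_sum.
have pairsS : #|S| * (#|S| - 1) <= #|A| * (#|A| - 1) + 2 * (#|B| * (#|S| - 1)).
  by have := pairs_extend (leq_addr #|B| #|A|); rewrite addKn -cardS.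
apply: slack_le; rewrite capT (sum_setU_disjoint _ sBA) (sum_deg_split gsym) (sum_deg_split hsym).
have := sum_setC A (fun x => deg_in h x setT); have := sum_setC S (fun x => deg_in h x setT).
rewrite /S (sum_setU_disjoint _ sBA) -/S.
have := sum_deg_in_setC g T (~: T); have := sum_deg_in_setC h A (~: A).
have := internal_edges; have := outer_edges.
lia.
Qed.
End InducedSubgraph.

Lemma sorted_nth_anti (s : seq nat) i j : sorted geq s -> i <= j -> nth 0 s j <= nth 0 s i.
Proof.
move=> ss ij; case: (ltnP j (size s)) => jsz; last by rewrite nth_default.
have isz : i < size s := leq_ltn_trans ij jsz.
have tr : transitive geq by move=> a b c /= ab bc; apply: leq_trans bc ab.
exact: (sorted_leq_nth tr (fun a => leqnn a) 0 ss).
Qed.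

(* The first k vertices {0, ..., k-1} of 'I_n: in a realization of a sorted
   degree sequence they carry the k largest degrees. *)
Definition head_set (n k : nat) : {set 'I_n} := [set x : 'I_n | x < k].

Lemma card_head_set n k : k <= n -> #|head_set n k| = k.
Proof.
move=> kn; have -> : head_set n k = widen_ord kn @: [set: 'I_k].
  apply/setP => x; rewrite !inE; apply/idP/imsetP => [xk|[y _ ->]]; last exact: (ltn_ord y).
  by exists (Ordinal xk) => //; apply: val_inj.
by rewrite card_imset ?cardsT ?card_ord // => a b /(congr1 val) /= /val_inj.
Qed.

Lemma sum_head_set n k (G : nat -> nat) : k <= n ->
  \sum_(0 <= j < k) G j = \sum_(x in head_set n k) G x.
Proof.
move=> kn; rewrite (big_nat_widen _ _ _ _ _ kn) big_mkord.
by apply: eq_bigl => x; rewrite inE.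
Qed.

Lemma sum_tail_set n k (G : nat -> nat) : k <= n ->
  \sum_(k <= j < n) G j = \sum_(x in ~: head_set n k) G x.
Proof.
move=> kn; apply/(@addnI (\sum_(0 <= j < k) G j)).
by rewrite -big_cat_nat // (sum_head_set _ kn) sum_setC big_mkord.
Qed.

Lemma sum_head_set_max n k (F : nat -> nat) (S : {set 'I_n}) :
  {homo F : i j /~ i <= j} -> k <= n -> #|S| = k ->
  \sum_(x in S) F x <= \sum_(x in head_set n k) F x.
Proof.
move=> Fanti kn cS; set K := head_set n k.
rewrite (big_setID K) [X in _ <= X](big_setID S) /= setIC leq_add2l.
have outK : \sum_(x in S :\: K) F x <= #|S :\: K| * F k.
  by apply: sum_le_card_mul => x; rewrite !inE -leqNgt => /andP[kx _]; apply: Fanti.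
have inK : #|K :\: S| * F k <= \sum_(x in K :\: S) F x.
  by apply: card_mul_le_sum => x; rewrite !inE => /andP[_ xk]; apply/Fanti/ltnW.
have cardD : #|S :\: K| = #|K :\: S| by rewrite !cardsD cS card_head_set // setIC.
by apply: leq_trans outK _; rewrite cardD.
Qed.

Section Realization.
Variables (n : nat) (g : rel 'I_n) (d : seq nat).
Hypothesis gd : realizes g d.

Lemma realized_deg v : deg_in g v setT = nth 0 d v.
Proof. by case: gd => _ [_ degs]; rewrite -deg_deg_in degs. Qed.

Lemma Delta_slack k : k <= n -> Delta k d = slack g (head_set n k).
Proof.
case: gd => _ [szd _] kn; rewrite /Delta /slack szd card_head_set //.
rewrite (sum_tail_set _ kn) (sum_head_set _ kn).
by rewrite PoszD; congr (_ + Posz _ - Posz _)%R; apply: eq_bigr => x _; rewrite realized_deg.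
Qed.

Lemma slack_head_set_min k (S : {set 'I_n}) : sorted geq d -> k <= n -> #|S| = k ->
  (slack g (head_set n k) <= slack g S)%R.
Proof.
move=> sd kn cS; apply: slack_le; rewrite card_head_set // cS.
have anti : {homo (fun i => nth 0 d i + minn k (nth 0 d i)) : i j /~ i <= j}.
  by move=> i j ji /=; have := sorted_nth_anti sd ji; lia.
have degE (X : {set 'I_n}) (F : nat -> nat) :
    \sum_(x in X) F (nth 0 d x) = \sum_(x in X) F (deg_in g x setT).
  by apply: eq_bigr => x _; rewrite realized_deg.
have := sum_head_set_max anti kn cS.
rewrite (degE _ (fun a => a + minn k a)) (degE _ (fun a => a + minn k a)) !big_split /=.
have := sum_setC S (fun x => minn k (deg_in g x setT)).
have := sum_setC (head_set n k) (fun x => minn k (deg_in g x setT)).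
rewrite -!addnA leq_add2l; abstract_sums; lia.
Qed.
End Realization.

Section Mdeg.
Variable s : seq nat.
Hypothesis ss : sorted geq s.

Lemma mdeg_le_size : mdeg s <= size s.
Proof. by apply/bigmax_leqP => j _; exact: ltn_ord. Qed.

Lemma nth_ge_below_mdeg j : j < mdeg s -> j <= nth 0 s j.
Proof.
move=> jm; rewrite leqNgt; apply/negP => sj.
suff : mdeg s <= j by rewrite leqNgt jm.
apply/bigmax_leqP => i iP; rewrite ltnNge; apply/negP => ji.
by have := sorted_nth_anti ss ji; move: iP; lia.
Qed.

Hypothesis s0 : 0 < size s.

Lemma mdeg_gt0 : 0 < mdeg s.
Proof.
exact: (@leq_bigmax_cond _ (fun j : 'I_(size s) => j <= nth 0 s j)
  (fun j : 'I_(size s) => j.+1) (Ordinal s0) (leq0n _)).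
Qed.

Lemma nth_lt_from_mdeg v : mdeg s <= v -> nth 0 s v < mdeg s.
Proof.
move=> mv; rewrite ltnNge; apply/negP => ms.
case: (ltnP v (size s)) => vs; last first.
  by move: ms; rewrite nth_default // leqn0 => /eqP m0; move: mdeg_gt0; rewrite m0.
have msz : mdeg s < size s := leq_ltn_trans mv vs.
have := @leq_bigmax_cond _ (fun j : 'I_(size s) => j <= nth 0 s j)
  (fun j : 'I_(size s) => j.+1) (Ordinal msz).
by rewrite /= ltnn => /(_ (leq_trans ms (sorted_nth_anti ss mv))).
Qed.
End Mdeg.

Lemma discrete_ivt (c : nat -> nat) : c 0 = 0 -> (forall j, c j.+1 <= (c j).+1) ->
  forall M k, k <= c M -> exists2 j, j <= M & c j = k.
Proof.
move=> c0 cS; elim=> [|M IH] k kM.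
  by exists 0 => //; move: kM; rewrite c0 leqn0 => /eqP.
case: (ltnP (c M) k) => kcM; last by have [j jM cj] := IH k kcM; exists j => //; apply: leqW.
by exists M.+1 => //; have := cS M; lia.
Qed.

Section Domination.
Variables (e d : seq nat) (p n : nat) (h : rel 'I_p) (g : rel 'I_n) (f : 'I_p -> 'I_n).
Hypotheses (se : sorted geq e) (sd : sorted geq d) (d0 : 0 < size d).
Hypotheses (he : realizes h e) (gd : realizes g d) (finj : injective f)
  (fh : forall x y, h x y = g (f x) (f y)).

Let preim j := f @^-1: head_set n j.

(* Enlarging the segment by one vertex adds at most one preimage, f being
   injective. *)
Lemma preim_head_step j : #|preim j.+1| <= (#|preim j|).+1.
Proof.
apply: (@leq_trans #|preim j :|: [set x | f x == j :> nat]|).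
  by apply: subset_leq_card; apply/subsetP => x; rewrite !inE ltnS leq_eqVlt orbC.
rewrite cardsU -addn1; apply: leq_trans (leq_subr _ _) _; rewrite leq_add2l.
apply/card_le1_eqP => x y; rewrite !inE => /eqP fx /eqP fy.
by apply: finj; apply: val_inj; rewrite /= fx fy.
Qed.

Variable k : nat.
Hypotheses (k1 : 0 < k) (km : k <= mdeg e).

Lemma k_le_p : k <= p.
Proof. by case: he => _ [sze _]; rewrite -sze (leq_trans km (mdeg_le_size e)). Qed.

Lemma mdeg_d_le_n : mdeg d <= n.
Proof. by case: gd => _ [szd _]; rewrite -szd mdeg_le_size. Qed.

(* If the first m(d) vertices of g pull back to at least k vertices, some
   initial segment of length j <= m(d) pulls back to exactly k vertices. *)
Lemma Delta_dominated_exact : k <= #|preim (mdeg d)| ->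
  exists2 j, 0 < j <= mdeg d & (Delta k e <= Delta j d)%R.
Proof.
move=> k_preim; case: he gd => [[hsym _] _] [[gsym girr] _].
have c0 : #|preim 0| = 0 by apply: eq_card0 => x; rewrite !inE.
have [j jm cj] := discrete_ivt c0 preim_head_step k_preim.
have jn : j <= n := leq_trans jm mdeg_d_le_n.
exists j; first by rewrite jm andbT lt0n; apply: contraTneq k1 => j0; rewrite -cj j0 c0.
rewrite (Delta_slack he k_le_p) (Delta_slack gd jn).
apply: le_trans (slack_head_set_min he se k_le_p cj) _.
exact: slack_preim.
Qed.

(* Otherwise the preimage A of the first m(d) vertices is completed to a
   k-set by vertices among the first k of h, all of degree >= k - 1. *)
Lemma Delta_dominated_extend : #|preim (mdeg d)| < k ->
  (Delta k e <= Delta (mdeg d) d)%R.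
Proof.
set A := preim (mdeg d) => A_small; case: he gd => [[hsym _] _] [[gsym girr] _].
have kp := k_le_p; set K := head_set p k.
have cKA : k - #|A| <= #|K :\: A|.
  rewrite cardsD card_head_set //.
  have : #|K :&: A| <= #|A| by apply/subset_leq_card/subsetIr.
  lia.
have [B sBKA cB] := exists_subset_card cKA.
have sBA : B \subset ~: A by apply/subsetP => x /(subsetP sBKA); rewrite !inE => /andP[].
have cS : #|A :|: B| = k by rewrite card_setU_disjoint // cB; lia.
rewrite (Delta_slack he kp) (Delta_slack gd mdeg_d_le_n).
apply: le_trans (slack_head_set_min he se kp cS) _.
apply: slack_preim_ext => // [x xB|v].
  have /(subsetP sBKA) := xB; rewrite !inE => /andP[_ xk].
  have k1_le : k.-1 <= nth 0 e k.-1 by apply: nth_ge_below_mdeg; lia.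
  have x_le : x <= k.-1 by lia.
  have := sorted_nth_anti se x_le; rewrite cS (realized_deg he); lia.
rewrite inE -leqNgt card_head_set ?mdeg_d_le_n // (realized_deg gd).
by move=> /(nth_lt_from_mdeg sd d0) /ltnW.
Qed.

Lemma Delta_dominated : exists2 j, 0 < j <= mdeg d & (Delta k e <= Delta j d)%R.
Proof.
have [k_preim | A_small] := leqP k #|preim (mdeg d)|; first exact: Delta_dominated_exact.
by exists (mdeg d); rewrite ?mdeg_gt0 ?leqnn ?Delta_dominated_extend.
Qed.
End Domination.

Theorem theorem13 (e d : seq nat) :
  degree_sequence e -> degree_sequence d -> rao_le e d ->
  (Delta_star e <= Delta_star d)%R.
Proof.
move=> [e0 [se _]] [d0 [sd _]] [p [n [h [g [f [he gd finj fh]]]]]].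
have bound k : 1 <= k <= mdeg e -> (Delta k e <= Delta_star d)%R.
  case/andP=> k1 km; have [j jm Hj] := Delta_dominated se sd d0 he gd finj fh k1 km.
  have jr : j \in index_iota 1 (mdeg d).+1 by rewrite mem_index_iota ltnS.
  apply: (le_trans Hj); rewrite /Delta_star.
  exact: (@le_bigmax_seq _ int _ _ _ j xpredT (fun k => Delta k d) jr).
rewrite {1}/Delta_star big_seq; apply: bigmax_le => [|k]; first by apply: bound; rewrite leqnn mdeg_gt0.
by rewrite mem_index_iota ltnS => /bound.
Qed.
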